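(* For $C\in\mathbb D$, $$C^\beta=\{c\in\mathcal S: c\circ\bar K_C(z,\partial_z)=0\},$$ where $\bar K_C(z,\partial_z)$ is $\bar K_C$ with $x$ replaced by $z$ and $c\circ\bar K_C(z,\partial_z)$ is the distribution $u\mapsto c(\bar K_C(z,\partial_z)u)$.
   Context: Fix an integer $r>1$ and constants $a_1,\dots,a_{r-2}\in\mathbb C$, and let $L_0=\partial^r-a_{r-2}\partial^{r-2}-\cdots-a_1\partial-x$, where $\partial=d/dx$. Fix a basis $f_1,\dots,f_r$ of $\ker L_0$ normalized so that $|Wr(f_1,\dots,f_r)|=1$. For a function $f$ of one variable write $\hat f(x,z)=f(x+z)$. $\mathcal S$ denotes the space of finitely supported distributions in the $z$-plane: finite linear combinations of $\delta_\lambda\circ\partial_z^j$, where $\delta_\lambda$ evaluates its argument at $z=\lambda$; applied to a function of $(x,z)$ such a distribution acts in $z$ and yields a function of $x$. $\mathbb D$ is the set of finite-dimensional subspaces $C\subset\mathcal S$ having a basis $c_i=\delta_{\lambda_i}\circ(\partial_z+\gamma_i)$, $i=1,\dots,n$ ($n\ge1$), with $\lambda_i$ pairwise distinct and $\gamma_i\in\mathbb C$. For $C\in\mathbb D$ put $N=rn$, let $\phi_1,\dots,\phi_N$ be the functions $c_i(\hat f_j)$, and let $\bar K_C$ be the operator $u\mapsto\kappa\,|Wr(\phi_1,\dots,\phi_N,u)|$ with $\kappa$ the nonzero constant making the coefficient of $\partial^N$ a monic polynomial (it has polynomial coefficients); $Wr(v_1,\dots,v_m)$ is the matrix with first row $(v_1,\dots,v_m)$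 and each subsequent row the derivative of the previous. $\flat$ is the unique $\mathbb C$-linear anti-automorphism of the Weyl algebra $\mathbb C[x]\langle\partial\rangle$ with $x^\flat=L_0$, $\partial^\flat=\partial$ (equivalently $T(x,\partial_x)\hat f(x,z)=T^\flat(z,\partial_z)\hat f(x,z)$ for all $f\in\ker L_0$). $C^\beta:=\{c\in\mathcal S: c(\hat f)\in\ker\bar K_C^\flat\text{ for all }f\in\ker L_0\}$. *)

(* The complex plane is R[i] for an
   arbitrary R : realType, viewed as a numFieldType so that MathComp-Analysis
   derivatives (derive1 / derivable) are complex derivatives. *)
From mathcomp Require Import all_boot all_algebra.
From mathcomp Require Import complex.
From mathcomp Require Import all_classical all_reals all_analysis.
Import numFieldNormedType.Exports.
Import GRing.Theory Num.Theory.
Set Implicit Arguments.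
Unset Strict Implicit.
Unset Printing Implicit Defensive.
Local Open Scope ring_scope.

Definition Cx (R : realType) : numClosedFieldType := R[i].

Section Defs.
Variable R : realType.
Local Notation C := (Cx R).

Definition Dn (k : nat) (h : C -> C) : C -> C := derive1n k h.

Definition smooth (h : C -> C) : Prop := forall (k : nat) (x : C), derivable (Dn k h) x 1.

(* L_0 = d^r - a_{r-2} d^{r-2} - ... - a_1 d - x  (only a_1..a_{r-2} are used) *)
Definition L0 (r : nat) (a : nat -> C) (h : C -> C) : C -> C :=
  fun x => Dn r h x - \sum_(1 <= m < r.-1) a m * Dn m h x - x * h x.

Definition kerL0 (r : nat) (a : nat -> C) (h : C -> C) : Prop :=
  smooth h /\ forall x, L0 r a h x = 0.

Definition wr_mx (m : nat) (v : nat -> C -> C) (x : C) : 'M[C]_m :=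
  \matrix_(i < m, j < m) Dn i (v j) x.

Definition wr_mx_ext (N : nat) (v : nat -> C -> C) (u : C -> C) (x : C) : 'M[C]_N.+1 :=
  \matrix_(i < N.+1, j < N.+1) Dn i (if (j < N)%N then v j else u) x.

Definition hat (f : C -> C) : C -> C -> C := fun x z => f (x + z).

(* finitely supported distributions: (a, lambda, j) stands for
   a * delta_lambda o d_z^j; a distribution is a finite sum of these *)
Definition distr := seq (C * C * nat).

Definition dapp (c : distr) (g : C -> C) : C :=
  \sum_(t <- c) t.1.1 * Dn t.2 g t.1.2.

Definition dact (c : distr) (G : C -> C -> C) : C -> C := fun x => dapp c (G x).

(* c_i = delta_{lambda_i} o (d_z + gamma_i) *)
Definition cbasis (lam gam : nat -> C) (i : nat) : distr :=
  [:: (1, lam i, 1%N); (gam i, lam i, 0%N)].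

Definition phi (r : nat) (lam gam : nat -> C) (f : nat -> C -> C) (k : nat) : C -> C :=
  dact (cbasis lam gam (k %/ r)%N) (hat (f (k %% r)%N)).

Definition polyop (p : seq {poly C}) (u : C -> C) : C -> C :=
  fun x => \sum_(k < size p) (p`_k).[x] * Dn k u x.

(* action of T^flat for T = sum_k p_k(x) d^k, where flat is the anti-automorphism
   with x^flat = L_0, d^flat = d:  (p_k(x) d^k)^flat = d^k o p_k(L_0) *)
Definition flatop (r : nat) (a : nat -> C) (p : seq {poly C}) (g : C -> C) : C -> C :=
  fun x => \sum_(k < size p)
     Dn k (fun y => \sum_(j < size p`_k) (p`_k)`_j * iter j (L0 r a) g y) x.

Definition inCbeta (r : nat) (a : nat -> C) (p : seq {poly C}) (c : distr) : Prop :=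
  forall f : C -> C, kerL0 r a f -> forall x, flatop r a p (dact c (hat f)) x = 0.

End Defs.

(* Both sides are conditions on one finitely supported distribution,
   [e = c o Kbar_C(z, d_z)]: expanding the coefficients of [Kbar_C] gives
   [c(Kbar_C(z, d_z) u) = e(u)], and since [x^flat = L0] acts on
   [x |-> c(hat f x)] as multiplication by [z] inside [c] (for [f] in
   [ker L0]), also [Kbar_C^flat (c(hat f)) (x) = e(hat f x)]. So [c] is in
   [C^beta] iff [e] kills every translate of every [f] in [ker L0], and it
   remains to see that such an [e] is zero.  The distributions killing these
   translates are stable under [e |-> e o (z - mu)]; composing with suitable
   powers of such factors turns a nonzero [e] into a nonzero multiple of a
   single [delta_l0], which cannot kill all translates of [f_0], and
   [f_0 <> 0] because the Wronskian is [1]. *)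

From mathcomp Require Import all_boot all_algebra.
From mathcomp Require Import complex.
From mathcomp Require Import all_classical all_reals all_analysis.
From mathcomp Require Import ring.
Import numFieldNormedType.Exports.
Import GRing.Theory Num.Theory.
Local Open Scope ring_scope.
Set Implicit Arguments.
Unset Strict Implicit.

Section Cbeta.
Variable R : realType.
Local Notation C := (Cx R).

Section Calculus.
Implicit Types F G : C -> C.

Lemma derive1_shift F (y z : C) :
  derive1 (fun w => F (y + w)) z = derive1 F (y + z).
Proof. by rewrite /derive1; do 3 f_equal; apply/funext=> h /=; rewrite addrCA. Qed.

Lemma derivable_shift F (y z : C) :
  derivable F (y + z) 1 -> derivable (fun w => F (y + w)) z 1.
Proof.
rewrite /derivable.
have -> : (fun h : C => h^-1 *: ((F \o shift (y + z)) h%:A - F (y + z))) =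
  (fun h : C => h^-1 *: (((fun w => F (y + w)) \o shift z) h%:A - F (y + z))).
  by apply/funext=> h /=; rewrite addrCA.
by [].
Qed.

Lemma derive1D F G x : derivable F x 1 -> derivable G x 1 ->
  derive1 (fun y => F y + G y) x = derive1 F x + derive1 G x.
Proof. by move=> hF hG; rewrite !derive1E; exact: (deriveD hF hG). Qed.

Lemma derive1B F G x : derivable F x 1 -> derivable G x 1 ->
  derive1 (fun y => F y - G y) x = derive1 F x - derive1 G x.
Proof. by move=> hF hG; rewrite !derive1E; exact: (deriveB hF hG). Qed.

Lemma derive1M F G x : derivable F x 1 -> derivable G x 1 ->
  derive1 (fun y => F y * G y) x = F x * derive1 G x + G x * derive1 F x.
Proof. by move=> hF hG; rewrite !derive1E (deriveM hF hG). Qed.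

Lemma derivable1M F G x : derivable F x 1 -> derivable G x 1 ->
  derivable (fun y => F y * G y) x 1.
Proof.
move=> hF hG; have hFG := derivableM hF hG.
by have <- : F * G = (fun y => F y * G y) by apply/funext.
Qed.

Lemma derive1Zl (k : C) F x : derivable F x 1 ->
  derive1 (fun y => k * F y) x = k * derive1 F x.
Proof. by move=> hF; rewrite !derive1E (deriveMl k hF). Qed.

Lemma derivable1Zl (k : C) F x : derivable F x 1 -> derivable (fun y => k * F y) x 1.
Proof. by move=> hF; apply: (derivable1M (derivable_cst k x 1) hF). Qed.

Lemma derive1_idfun x : derive1 (fun y : C => y) x = 1.
Proof. by rewrite derive1E; exact: derive_id. Qed.

Lemma derivable_idfun x : derivable (fun y : C => y) x 1.
Proof. exact: derivable_id. Qed.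

Lemma derivable_big (I : Type) (s : seq I) (F : I -> C -> C) x :
  (forall i, derivable (F i) x 1) ->
  derivable (fun y => \sum_(i <- s) F i y) x 1 /\
  derive1 (fun y => \sum_(i <- s) F i y) x = \sum_(i <- s) derive1 (F i) x.
Proof.
move=> hF; elim: s => [|t s [IHd IHe]].
  have -> : (fun y => \sum_(i <- [::]) F i y) = (fun _ => 0).
    by apply/funext=> y; rewrite big_nil.
  by rewrite big_nil; split; [exact: derivable_cst | exact: derive1_cst].
have -> : (fun y => \sum_(i <- t :: s) F i y) = (fun y => F t y + \sum_(i <- s) F i y).
  by apply/funext=> y; rewrite big_cons.
have hD := derivableD (hF t) IHd.
by rewrite big_cons (derive1D (hF t) IHd) IHe; split.
Qed.

Lemma DnS k F : Dn k.+1 F = derive1 (Dn k F).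
Proof. by []. Qed.

Lemma DnD j k F : Dn j (Dn k F) = Dn (j + k) F.
Proof. by rewrite /Dn /derive1n iterD. Qed.

Lemma Dn_cst0 k : Dn k (fun _ : C => (0 : C)) = fun _ => 0.
Proof. by elim: k => [//|k IH]; apply/funext=> z; rewrite DnS IH derive1_cst. Qed.

Lemma Dn_shift k F y : Dn k (fun w => F (y + w)) = fun z => Dn k F (y + z).
Proof.
by elim: k => [//|k IH]; apply/funext=> z; rewrite DnS IH derive1_shift.
Qed.

Lemma smooth_Dn k F : smooth F -> smooth (Dn k F).
Proof. by move=> hF m z; rewrite DnD; apply: hF. Qed.

Lemma smooth_shift F y : smooth F -> smooth (fun w => F (y + w)).
Proof. by move=> hF k x; rewrite Dn_shift; apply: derivable_shift. Qed.

Lemma DnB k F G : smooth F -> smooth G ->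
  Dn k (fun z => F z - G z) = fun z => Dn k F z - Dn k G z.
Proof.
by move=> hF hG; elim: k => [//|k IH]; apply/funext=> z; rewrite DnS IH derive1B.
Qed.

Lemma smoothB F G : smooth F -> smooth G -> smooth (fun z => F z - G z).
Proof. by move=> hF hG k z; rewrite DnB //; exact: derivableB. Qed.

Lemma Dn_big (I : Type) (s : seq I) (G : I -> C -> C) k :
  (forall i, smooth (G i)) ->
  Dn k (fun z => \sum_(i <- s) G i z) = fun z => \sum_(i <- s) Dn k (G i) z.
Proof.
move=> hG; elim: k => [//|k IH]; apply/funext=> z.
by rewrite DnS IH (derivable_big s (fun i => hG i k z)).2.
Qed.

Lemma smooth_big (I : Type) (s : seq I) (G : I -> C -> C) :
  (forall i, smooth (G i)) -> smooth (fun z => \sum_(i <- s) G i z).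
Proof.
by move=> hG k z; rewrite Dn_big //; exact: (derivable_big s (fun i => hG i k z)).1.
Qed.

Lemma DnZl (b : C) G k : smooth G -> Dn k (fun z => b * G z) = fun z => b * Dn k G z.
Proof.
by move=> hG; elim: k => [//|k IH]; apply/funext=> z; rewrite DnS IH derive1Zl.
Qed.

Lemma smoothZl (b : C) G : smooth G -> smooth (fun z => b * G z).
Proof. by move=> hG k z; rewrite DnZl //; exact: derivable1Zl. Qed.

Lemma Dn_mulX G k : smooth G ->
  Dn k (fun z => z * G z) = fun z => z * Dn k G z + k%:R * Dn k.-1 G z.
Proof.
move=> hG; elim: k => [|k IH]; first by apply/funext=> z; rewrite mul0r addr0.
apply/funext=> z; rewrite DnS IH.
have hX := derivable1M (derivable_idfun (x := z)) (hG k z).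
rewrite (derive1D hX (derivable1Zl (k := k%:R) (hG k.-1 z))).
rewrite (derive1M (derivable_idfun (x := z)) (hG k z)) derive1_idfun.
rewrite (derive1Zl k%:R (hG k.-1 z)) -DnS.
case: k {IH hX} => [|k] /=; first by rewrite mulr1 mul0r addr0 mul1r.
by rewrite mulr1 -[k.+2]addn1 natrD mulrDl mul1r addrA addrAC.
Qed.

Lemma smooth_mulX G : smooth G -> smooth (fun z => z * G z).
Proof.
move=> hG k z; rewrite Dn_mulX //.
apply: derivableD (derivable1Zl (k := k%:R) (hG k.-1 z)).
exact: derivable1M (derivable_idfun (x := z)) (hG k z).
Qed.

Lemma smooth_mulXn j G : smooth G -> smooth (fun z => z ^+ j * G z).
Proof.
elim: j G => [|j IH] G hG.
  by have -> : (fun z : C => z ^+ 0 * G z) = G by apply/funext=> z; rewrite mul1r.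
have -> : (fun z : C => z ^+ j.+1 * G z) = (fun z => z * (z ^+ j * G z)).
  by apply/funext=> z; rewrite exprS mulrA.
exact/smooth_mulX/IH.
Qed.

End Calculus.

Section DistributionAlgebra.
Implicit Types (F G : C -> C) (e : distr R).

Definition dscale (b : C) e : distr R := map (fun t => (b * t.1.1, t.1.2, t.2)) e.

(* [dcompD k e] is [e o d^k] and [dcompX e] is [e o z]: by Leibniz,
   [delta_l o d^j o z = l delta_l o d^j + j delta_l o d^(j-1)]. *)
Definition dcompD (k : nat) e : distr R := map (fun t => (t.1.1, t.1.2, (t.2 + k)%N)) e.

Fixpoint dcompX e : distr R :=
  if e is t :: e' then
    (t.1.1 * t.2%:R, t.1.2, t.2.-1) :: (t.1.1 * t.1.2, t.1.2, t.2) :: dcompX e'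
  else [::].

Definition dcompXB (mu : C) e : distr R := dcompX e ++ dscale (- mu) e.

Lemma dapp_nil G : dapp [::] G = 0.
Proof. by rewrite /dapp big_nil. Qed.

Lemma dapp_cons t e G : dapp (t :: e) G = t.1.1 * Dn t.2 G t.1.2 + dapp e G.
Proof. by rewrite /dapp big_cons. Qed.

Lemma dapp_cat e1 e2 G : dapp (e1 ++ e2) G = dapp e1 G + dapp e2 G.
Proof. by rewrite /dapp big_cat. Qed.

Lemma dapp_bigcat (I : Type) (s : seq I) (E : I -> distr R) G :
  dapp (\big[cat/[::]]_(i <- s) E i) G = \sum_(i <- s) dapp (E i) G.
Proof.
exact: (big_morph (fun e => dapp e G) (fun e1 e2 => dapp_cat e1 e2 G) (dapp_nil G)).
Qed.

Lemma dapp_dscale b e G : dapp (dscale b e) G = b * dapp e G.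
Proof. by rewrite /dapp big_map big_distrr; apply: eq_bigr => t _ /=; rewrite mulrA. Qed.

Lemma dapp_dcompD k e G : dapp (dcompD k e) G = dapp e (Dn k G).
Proof. by rewrite /dapp big_map; apply: eq_bigr => t _ /=; rewrite DnD. Qed.

Lemma dapp_dcompX e G : smooth G -> dapp (dcompX e) G = dapp e (fun z => z * G z).
Proof.
move=> hG; elim: e => [|t e IH] /=; first by rewrite !dapp_nil.
by rewrite !dapp_cons IH Dn_mulX //= mulrDr !mulrA addrA [X in X + _]addrC.
Qed.

Lemma dapp_dcompXn j e G : smooth G ->
  dapp e (fun z => z ^+ j * G z) = dapp (iter j dcompX e) G.
Proof.
elim: j G => [|j IH] G hG /=.
  by have -> : (fun z : C => z ^+ 0 * G z) = G by apply/funext=> z; rewrite mul1r.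
have -> : (fun z : C => z ^+ j.+1 * G z) = (fun z => z ^+ j * (z * G z)).
  by apply/funext=> z; rewrite exprS mulrCA mulrA.
by rewrite (dapp_dcompX _ hG) (IH _ (smooth_mulX hG)).
Qed.

Lemma dappD_big (I : Type) (s : seq I) (H : I -> C -> C) e :
  (forall i, smooth (H i)) ->
  dapp e (fun z => \sum_(i <- s) H i z) = \sum_(i <- s) dapp e (H i).
Proof.
move=> hH; rewrite /dapp [RHS]exchange_big /=; apply: eq_bigr => t _.
by rewrite Dn_big // big_distrr.
Qed.

Lemma dappZ b G e : smooth G -> dapp e (fun z => b * G z) = b * dapp e G.
Proof.
by move=> hG; rewrite /dapp big_distrr; apply: eq_bigr => t _ /=; rewrite DnZl // mulrCA.
Qed.

(* [c o T(z, d_z)] for [T = polyop p]: [p_k(z) d^k] contributes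
   [sum_j p_kj (c o z^j) o d^k]. *)
Definition dcomp_polyop (p : seq {poly C}) (c : distr R) : distr R :=
  \big[cat/[::]]_(k < size p) \big[cat/[::]]_(j < size p`_k)
     dscale (p`_k)`_j (dcompD k (iter j dcompX c)).

Lemma dapp_dcomp_polyop p c G :
  dapp (dcomp_polyop p c) G = \sum_(k < size p) \sum_(j < size p`_k)
     (p`_k)`_j * dapp (iter j dcompX c) (Dn k G).
Proof.
rewrite /dcomp_polyop dapp_bigcat; apply: eq_bigr => k _.
by rewrite dapp_bigcat; apply: eq_bigr => j _; rewrite dapp_dscale dapp_dcompD.
Qed.

Lemma dapp_polyop p c u : smooth u -> dapp c (polyop p u) = dapp (dcomp_polyop p c) u.
Proof.
move=> hu; rewrite dapp_dcomp_polyop.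
have -> : polyop p u = fun z => \sum_(k < size p) \sum_(j < size p`_k)
     (p`_k)`_j * (z ^+ j * Dn k u z).
  apply/funext=> z; rewrite /polyop; apply: eq_bigr => k _.
  by rewrite horner_coef big_distrl; apply: eq_bigr => j _; rewrite mulrA.
have hmon k j b : smooth (fun z : C => b * (z ^+ j * Dn k u z)).
  exact/smoothZl/smooth_mulXn/(smooth_Dn (k := k) hu).
rewrite dappD_big; last by move=> k; apply: smooth_big => j; exact: hmon.
apply: eq_bigr => k _; rewrite dappD_big; last by move=> j; exact: hmon.
apply: eq_bigr => j _; have hDk := smooth_Dn (k := k) hu.
by rewrite (dappZ _ _ (smooth_mulXn (j := j) hDk)) (dapp_dcompXn _ _ hDk).
Qed.

End DistributionAlgebra.

Section KernelTranslates.
Variables (r : nat) (a : nat -> C).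
Implicit Types (f : C -> C) (e : distr R).

Lemma Dn_L0 f j : smooth f -> Dn j (L0 r a f) = fun t =>
  Dn (j + r) f t - \sum_(1 <= m < r.-1) a m * Dn (j + m) f t
  - (t * Dn j f t + j%:R * Dn j.-1 f t).
Proof.
move=> hf.
have hm m : smooth (fun t => a m * Dn m f t) by exact/smoothZl/smooth_Dn.
have hS := smooth_big (s := index_iota 1 r.-1) hm.
have hA := smoothB (smooth_Dn (k := r) hf) hS.
rewrite /L0 (DnB _ hA (smooth_mulX hf)) (DnB _ (smooth_Dn hf) hS) (Dn_big _ j hm).
rewrite (Dn_mulX _ hf) DnD; apply/funext=> t; congr (_ - _ - _).
by apply: eq_bigr => m _; rewrite (DnZl _ _ (smooth_Dn hf)) DnD.
Qed.

Lemma kerL0_Dn f j t : kerL0 r a f ->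
  Dn (j + r) f t - \sum_(1 <= m < r.-1) a m * Dn (j + m) f t =
  t * Dn j f t + j%:R * Dn j.-1 f t.
Proof.
move=> [hf hL0]; have hz : L0 r a f = fun _ => 0 by apply/funext.
have := congr1 (fun g => g t) (Dn_L0 j hf).
by rewrite hz Dn_cst0 /= => /esym/eqP; rewrite subr_eq0 => /eqP.
Qed.

Lemma dapp_Dn_hat e f k y :
  dapp e (Dn k (hat f y)) = \sum_(t <- e) t.1.1 * Dn (t.2 + k) f (y + t.1.2).
Proof. by apply: eq_bigr => t _; rewrite DnD /hat Dn_shift. Qed.

(* [hat f x z = f (x + z)] is symmetric in [x] and [z]. *)
Lemma Dn_dact_hat e f k y : smooth f ->
  Dn k (dact e (hat f)) y = dapp e (Dn k (hat f y)).
Proof.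
move=> hf; rewrite dapp_Dn_hat.
have hterm (t : C * C * nat) : smooth (fun y => t.1.1 * Dn t.2 f (t.1.2 + y)).
  exact/smoothZl/smooth_shift/smooth_Dn.
have -> : dact e (hat f) = fun y => \sum_(t <- e) t.1.1 * Dn t.2 f (t.1.2 + y).
  by apply/funext=> z; apply: eq_bigr => t _; rewrite /hat Dn_shift addrC.
rewrite (Dn_big _ k hterm); apply: eq_bigr => t _.
by rewrite (DnZl _ _ (smooth_shift (smooth_Dn hf))) Dn_shift DnD addnC addrC.
Qed.

(* This is where [x^flat = L0] comes from. *)
Lemma L0_dact_hat e f : kerL0 r a f ->
  L0 r a (dact e (hat f)) = dact (dcompX e) (hat f).
Proof.
move=> hk; have hf := hk.1; apply/funext=> y.
rewrite /L0 Dn_dact_hat // dapp_Dn_hat.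
under [X in _ - X - _]eq_bigr do rewrite Dn_dact_hat // dapp_Dn_hat big_distrr.
rewrite -[dact e (hat f) y]/(Dn 0 (dact e (hat f)) y) Dn_dact_hat // dapp_Dn_hat.
rewrite /dact (dapp_dcompX _ (smooth_shift hf)) /dapp.
rewrite exchange_big big_distrr /= -!sumrB; apply: eq_bigr => t _.
rewrite (Dn_mulX _ (smooth_shift hf)) /hat !Dn_shift addn0.
have -> : \sum_(1 <= m < r.-1) a m * (t.1.1 * Dn (t.2 + m) f (y + t.1.2)) =
          t.1.1 * \sum_(1 <= m < r.-1) a m * Dn (t.2 + m) f (y + t.1.2).
  by rewrite big_distrr; apply: eq_bigr => m _; rewrite mulrCA.
by rewrite -mulrBr kerL0_Dn //; ring.
Qed.

Lemma iter_L0_dact_hat j e f : kerL0 r a f ->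
  iter j (L0 r a) (dact e (hat f)) = dact (iter j dcompX e) (hat f).
Proof. by move=> hk; elim: j => [//|j IH]; rewrite iterS IH L0_dact_hat. Qed.

Lemma flatop_dact_hat p c f y : kerL0 r a f ->
  flatop r a p (dact c (hat f)) y = dapp (dcomp_polyop p c) (hat f y).
Proof.
move=> hk; rewrite /flatop dapp_dcomp_polyop; apply: eq_bigr => k _.
have -> : (fun y => \sum_(j < size p`_k) p`_k`_j * iter j (L0 r a) (dact c (hat f)) y) =
    dact (\big[cat/[::]]_(j < size p`_k) dscale p`_k`_j (iter j dcompX c)) (hat f).
  apply/funext=> z; under eq_bigr do rewrite iter_L0_dact_hat //.
  rewrite /dact dapp_bigcat.
  by apply: eq_bigr => j _; rewrite dapp_dscale.
rewrite Dn_dact_hat ?dapp_bigcat; last exact: hk.1.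
by apply: eq_bigr => j _; rewrite dapp_dscale.
Qed.

End KernelTranslates.

Section Coefficients.
Implicit Types (e : distr R) (l mu : C).

Fixpoint dcoef e l (i : nat) : C :=
  if e is t :: e' then
    (if (t.1.2 == l) && (t.2 == i) then t.1.1 else 0) + dcoef e' l i
  else 0.

Definition dsupport e : seq C := [seq t.1.2 | t <- e].

Definition dorder e : nat := foldr (fun t m => maxn t.2.+1 m) 0%N e.

Lemma dcoef_cat e1 e2 l i : dcoef (e1 ++ e2) l i = dcoef e1 l i + dcoef e2 l i.
Proof. by elim: e1 => [|t e IH] /=; rewrite ?add0r // IH addrA. Qed.

Lemma dcoef_dscale b e l i : dcoef (dscale b e) l i = b * dcoef e l i.
Proof.
elim: e => [|t e IH] /=; first by rewrite mulr0.
by rewrite IH mulrDr; congr (_ + _); case: ifP; rewrite ?mulr0.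
Qed.

Lemma dcoef_dcompX1 t l i :
  dcoef (dcompX [:: t]) l i = l * dcoef [:: t] l i + i.+1%:R * dcoef [:: t] l i.+1.
Proof.
case: t => [[b lam] j] /=; rewrite !addr0.
have [->|_] := eqVneq lam l; last by rewrite /= !mulr0 addr0.
case: j => [|j] /=.
  by case: i => [|i] /=; rewrite ?mulr0 ?add0r ?addr0 // mulrC.
have [->|j_neq_i] := eqVneq j i.
  by rewrite !eqxx /= (gtn_eqF (ltnSn i)) /= mulr0 addr0 add0r mulrC.
rewrite eqSS (negbTE j_neq_i) /= mulr0 add0r addr0.
by case: ifP => _; rewrite ?mulr0 // mulrC.
Qed.

Lemma dcoef_dcompX e l i :
  dcoef (dcompX e) l i = l * dcoef e l i + i.+1%:R * dcoef e l i.+1.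
Proof.
elim: e => [|t e IH]; first by rewrite /= !mulr0 addr0.
have -> : dcompX (t :: e) = dcompX [:: t] ++ dcompX e by [].
by rewrite dcoef_cat dcoef_dcompX1 IH -[t :: e]cat1s !dcoef_cat !mulrDr addrACA.
Qed.

Lemma dcoef_dcompXB mu e l i :
  dcoef (dcompXB mu e) l i = (l - mu) * dcoef e l i + i.+1%:R * dcoef e l i.+1.
Proof. by rewrite dcoef_cat dcoef_dcompX dcoef_dscale mulrBl mulNr addrAC. Qed.

Lemma dcoef_iter_dcompXB mu m e i :
  dcoef (iter m (dcompXB mu) e) mu i =
  (\prod_(k < m) (i + k.+1)%:R) * dcoef e mu (i + m).
Proof.
elim: m i => [|m IH] i /=; first by rewrite big_ord0 mul1r addn0.
rewrite dcoef_dcompXB subrr mul0r add0r IH big_ord_recl /= addn1 mulrA.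
congr (_ * _ * _); last by rewrite addSnnS.
by apply: eq_bigr => k _; rewrite /bump /= add1n addSnnS.
Qed.

Lemma dcoef_iter_dcompXB_order0 mu m e l :
  (forall i, dcoef e l i.+1 = 0) ->
  forall i, dcoef (iter m (dcompXB mu) e) l i = (l - mu) ^+ m * dcoef e l i.
Proof.
move=> h0; elim: m => [|m IH] i /=; first by rewrite mul1r.
by rewrite dcoef_dcompXB !IH h0 !mulr0 addr0 exprS mulrA.
Qed.

Lemma dcoef_iter_dcompXB_ge mu m e l (J : nat) :
  (forall i, (J <= i)%N -> dcoef e l i = 0) ->
  forall i, (J <= i)%N -> dcoef (iter m (dcompXB mu) e) l i = 0.
Proof.
move=> hJ; elim: m => [|m IH] i hi //=; first exact: hJ.
by rewrite dcoef_dcompXB !IH ?mulr0 ?addr0 // (leq_trans hi).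
Qed.

Lemma dcoef_ge_dorder e l i : (dorder e <= i)%N -> dcoef e l i = 0.
Proof.
elim: e => [//|t e IH] /=; rewrite geq_max => /andP[ht he].
rewrite IH // addr0; case: ifP => // /andP[_ /eqP ti].
by move: ht; rewrite ti ltnn.
Qed.

Lemma dcoef_notin_dsupport e l i : l \notin dsupport e -> dcoef e l i = 0.
Proof.
elim: e => [//|t e IH] /=; rewrite in_cons negb_or => /andP[ht he].
rewrite IH // addr0; case: ifP => // /andP[/eqP tl _].
by move: ht; rewrite tl eqxx.
Qed.

Lemma dapp_dcoef e u (s : seq (C * nat)) : uniq s ->
  {subset [seq (t.1.2, t.2) | t <- e] <= s} ->
  dapp e u = \sum_(k <- s) dcoef e k.1 k.2 * Dn k.2 u k.1.
Proof.
move=> us; elim: e => [|t e IH] hsub.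
  by rewrite dapp_nil big1 // => k _; rewrite mul0r.
rewrite dapp_cons IH; last by move=> k hk; apply: hsub; rewrite /= in_cons hk orbT.
under [X in _ = X]eq_bigr do rewrite /= mulrDl.
rewrite big_split /=; congr (_ + _).
have ht : (t.1.2, t.2) \in s by apply: hsub; rewrite /= in_cons eqxx.
rewrite (bigD1_seq _ ht us) /= !eqxx /= big1 ?addr0 // => k hk.
case: ifP => [/andP[/eqP e1 /eqP e2]|_]; last by rewrite mul0r.
by move: hk; rewrite e1 e2 -surjective_pairing eqxx.
Qed.

Lemma dapp_dcoef_eq0 e u : (forall l i, dcoef e l i = 0) -> dapp e u = 0.
Proof.
move=> h0; rewrite (@dapp_dcoef e u (undup [seq (t.1.2, t.2) | t <- e])).
- by rewrite big1 // => k _; rewrite h0 mul0r.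
- exact: undup_uniq.
- by move=> k hk; rewrite mem_undup.
Qed.

Lemma dapp_delta e u l0 :
  (forall l i, (l, i) != (l0, 0%N) -> dcoef e l i = 0) ->
  dapp e u = dcoef e l0 0 * u l0.
Proof.
move=> h; pose s := undup ((l0, 0%N) :: [seq (t.1.2, t.2) | t <- e]).
have hin : (l0, 0%N) \in s by rewrite mem_undup in_cons eqxx.
rewrite (@dapp_dcoef e u s); last 2 first.
- exact: undup_uniq.
- by move=> k hk; rewrite mem_undup in_cons hk orbT.
rewrite (bigD1_seq _ hin (undup_uniq _)) /= big1 ?addr0 // => k hk.
by rewrite h ?mul0r // -surjective_pairing.
Qed.

End Coefficients.

Section Annihilator.
Variables (r : nat) (a : nat -> C).
Implicit Types (e : distr R) (l mu : C).

Definition kills_kerL0 e : Prop :=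
  forall f, kerL0 r a f -> forall y, dact e (hat f) y = 0.

(* [e o (z - mu)] acts on translates of [ker L0] as [L0 - mu] acts on [c(hat f x)]. *)
Lemma kills_kerL0_dcompXB mu e : kills_kerL0 e -> kills_kerL0 (dcompXB mu e).
Proof.
move=> he f hk y; rewrite /dact /dcompXB dapp_cat dapp_dscale.
rewrite [dapp e _](he f hk y) mulr0 addr0.
change (dact (dcompX e) (hat f) y = 0); rewrite -(L0_dact_hat e hk).
have -> : dact e (hat f) = fun _ => 0 by apply/funext=> z; exact: he.
rewrite /L0 Dn_cst0 mulr0 subr0 big1 ?subr0 // => m _.
by rewrite Dn_cst0 mulr0.
Qed.

Lemma kills_kerL0_iter_dcompXB mu m e :
  kills_kerL0 e -> kills_kerL0 (iter m (dcompXB mu) e).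
Proof. by move=> he; elim: m => [//|m IH] /=; exact: kills_kerL0_dcompXB. Qed.

Variables (f0 : C -> C) (x0 : C).
Hypotheses (kerL0_f0 : kerL0 r a f0) (f0x0_neq0 : f0 x0 != 0).

Lemma kills_kerL0_delta e l0 : kills_kerL0 e ->
  (forall l i, (l, i) != (l0, 0%N) -> dcoef e l i = 0) -> dcoef e l0 0 = 0.
Proof.
move=> he h; have := he f0 kerL0_f0 (x0 - l0).
rewrite /dact (dapp_delta _ h) /hat subrK => /eqP.
by rewrite mulf_eq0 (negbTE f0x0_neq0) orbF => /eqP.
Qed.

(* The factors [(z - mu)^J] remove the points [mu] of [s] one by one while
   only rescaling the order-0 coefficient at [l0] by [(l0 - mu)^J]. *)
Lemma kills_kerL0_dcoef0 (J : nat) l0 (s : seq C) e : kills_kerL0 e ->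
  (forall l i, (J <= i)%N -> dcoef e l i = 0) ->
  (forall l, l != l0 -> l \notin s -> forall i, dcoef e l i = 0) ->
  (forall i, dcoef e l0 i.+1 = 0) -> dcoef e l0 0 = 0.
Proof.
elim: s e => [|mu s IH] e he hJ hs h0.
  apply: kills_kerL0_delta => // l i; have [->|nl] := eqVneq l l0; last first.
    by move=> _; exact: hs.
  by case: i => [|i]; rewrite ?eqxx // => _; exact: h0.
have [mu_l0|mu_neq_l0] := eqVneq mu l0.
  apply: IH => // l nl ns; apply: hs => //.
  by rewrite in_cons negb_or mu_l0 nl.
pose e' := iter J (dcompXB mu) e.
have hJ' l i : (J <= i)%N -> dcoef e' l i = 0.
  by apply: dcoef_iter_dcompXB_ge; exact: hJ.
have hs' l : l != l0 -> l \notin s -> forall i, dcoef e' l i = 0.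
  move=> nl ns i; have [->|nm] := eqVneq l mu.
    by rewrite dcoef_iter_dcompXB hJ ?mulr0 // leq_addl.
  have hl k : dcoef e l k = 0 by apply: hs => //; rewrite in_cons negb_or nm.
  by rewrite dcoef_iter_dcompXB_order0 ?hl ?mulr0.
have h0' i : dcoef e' l0 i.+1 = 0 by rewrite dcoef_iter_dcompXB_order0 // h0 mulr0.
have := IH e' (kills_kerL0_iter_dcompXB _ _ he) hJ' hs' h0'.
rewrite dcoef_iter_dcompXB_order0 // => /eqP.
by rewrite mulf_eq0 expf_eq0 subr_eq0 eq_sym (negbTE mu_neq_l0) andbF => /eqP.
Qed.

Lemma kills_kerL0_dapp0 e u : kills_kerL0 e -> dapp e u = 0.
Proof.
move=> he; apply: dapp_dcoef_eq0 => l0 i0; apply/eqP/contraT => hnz.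
have ub i : dcoef e l0 i != 0 -> (i <= dorder e)%N.
  by apply: contraR; rewrite -ltnNge => /ltnW/dcoef_ge_dorder ->; rewrite eqxx.
have [j0 hj0 maxj0] := ex_maxnP (ex_intro _ i0 hnz) ub.
pose e1 := iter j0 (dcompXB l0) e.
have e1_neq0 : dcoef e1 l0 0 != 0.
  rewrite dcoef_iter_dcompXB add0n mulf_neq0 // prodf_seq_neq0.
  by apply/allP => k _ /=; rewrite pnatr_eq0.
case/negP: e1_neq0; apply/eqP; apply: (@kills_kerL0_dcoef0 (dorder e) l0 (dsupport e)).
- exact: kills_kerL0_iter_dcompXB.
- by move=> l i; apply: dcoef_iter_dcompXB_ge => k; exact: dcoef_ge_dorder.
- move=> l _ ns i; rewrite dcoef_iter_dcompXB_order0 ?dcoef_notin_dsupport ?mulr0 //.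
  by move=> k; exact: dcoef_notin_dsupport.
- move=> i; rewrite dcoef_iter_dcompXB; apply/eqP; rewrite mulf_eq0; apply/orP; right.
  by apply: contraT => /maxj0; rewrite addSn ltnNge leq_addl.
Qed.

End Annihilator.

Lemma det_wr_mx_eq0 m (v : nat -> C -> C) x :
  (0 < m)%N -> (forall y, v 0%N y = 0) -> \det (wr_mx m v x) = 0.
Proof.
case: m => [//|m] _ hv; rewrite (expand_det_col _ ord0) big1 // => i _.
by rewrite /wr_mx mxE /= (_ : v 0%N = fun _ => 0) ?Dn_cst0 ?mul0r //; apply/funext.
Qed.

End Cbeta.

Theorem mainTheorem8 (R : realType) (r : nat) (a : nat -> Cx R)
  (f : nat -> Cx R -> Cx R) (n : nat) (lam gam : nat -> Cx R)
  (kappa : Cx R) (p : seq {poly Cx R}) :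
  (1 < r)%N ->
  (* f_0, ..., f_{r-1} is a basis of ker L_0 with Wronskian determinant 1 *)
  (forall j, (j < r)%N -> kerL0 r a (f j)) ->
  (forall g, kerL0 r a g ->
     exists b : nat -> Cx R, forall x, g x = \sum_(j < r) b j * f j x) ->
  (forall x, \det (wr_mx r f x) = 1) ->
  (* C in D : basis delta_{lam_i} o (d_z + gam_i), i < n, lam_i distinct *)
  (0 < n)%N ->
  (forall i j, (i < n)%N -> (j < n)%N -> lam i = lam j -> i = j) ->
  (* Kbar_C = sum_k p_k(x) d^k = kappa |Wr(phi_1..phi_N, .)|, monic, N = r n *)
  kappa != 0 ->
  size p = (r * n).+1 ->
  p`_(r * n) \is monic ->
  (forall u, smooth u -> forall x,
     polyop p u x = kappa * \det (wr_mx_ext (r * n) (phi r lam gam f) u x)) ->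
  forall c : distr R,
    inCbeta r a p c <-> (forall u, smooth u -> dapp c (polyop p u) = 0).
Proof.
move=> r_gt1 kerf _ detWr1 _ _ _ _ _ _ c.
have r_gt0 : (0 < r)%N by exact: ltnW.
have kerf0 : kerL0 r a (f 0%N) by exact: kerf.
have [x0 f0x0] : exists x0, f 0%N x0 != 0.
  apply: contrapT => f0_eq0; have := detWr1 0.
  rewrite det_wr_mx_eq0 // => [/eqP|y]; first by rewrite eq_sym oner_eq0.
  by have [//|f0y] := eqVneq (f 0%N y) 0; case: f0_eq0; exists y.
split=> [inC u hu | annih g kerg x].
- rewrite dapp_polyop //; apply: (kills_kerL0_dapp0 kerf0 f0x0) => g kerg y.
  by rewrite /dact -(flatop_dact_hat p c y kerg); exact: inC.
- have hgx : smooth (hat g x) by exact: smooth_shift kerg.1.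
  by rewrite flatop_dact_hat // -dapp_polyop // annih.
Qed.
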